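(* Let $T=\left[\begin{smallmatrix} R & M\\ N & S\end{smallmatrix}\right]$ and $T'=\left[\begin{smallmatrix} R' & M'\\ N' & S'\end{smallmatrix}\right]$ be Morita context rings such that $R'$ and $S'$ are indecomposable rings and at least one of $M'$, $N'$ is nonzero. Then: (1) $\mathrm{Iso}_0^0(T,T')$ equals the set of all semigraded isomorphisms from $T$ to $T'$; (2) $\mathrm{Iso}_0^1(T,T')$ equals the set of all anti-semigraded isomorphisms from $T$ to $T'$. In particular, $\mathrm{Iso}_g(T,T')\subseteq\mathrm{Iso}_0(T,T')$.
   Context: All rings have an identity $1\neq 0$; a ring is indecomposable if its only central idempotents are $0$ and $1$. A Morita context $(R,S,M,N,f,g)$: rings $R,S$, an $R$-$S$-bimodule $M$, an $S$-$R$-bimodule $N$, bimodule morphisms $f:M\otimes_SN\to R$, $g:N\otimes_RM\to S$, with $[m,n]=f(m\otimes n)$, $(n,m)=g(n\otimes m)$ satisfying $[m,n]m'=m(n,m')$ and $n[m,n']=(n,m)n'$. Its Morita context ring $T=\left[\begin{smallmatrix} R & M\\ N & S\end{smallmatrix}\right]$ consists of formal matrices with entrywise addition and product $\left[\begin{smallmatrix} r & m\\ n & s\end{smallmatrix}\right]\left[\begin{smallmatrix} r' & m'\\ n' & s'\end{smallmatrix}\right]=\left[\begin{smallmatrix} rr'+[m,n'] & rm'+ms'\\ nr'+sn' & (n,m')+ss'\end{smallmatrix}\right]$; similarly for $T'$ (pairings also written $[\,,],(\,,)$). Grading: $T_{-1}=\left[\begin{smallmatrix} 0 & 0\\ N &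 0\end{smallmatrix}\right]$, $T_0=\left[\begin{smallmatrix} R & 0\\ 0 & S\end{smallmatrix}\right]$, $T_1=\left[\begin{smallmatrix} 0 & M\\ 0 & 0\end{smallmatrix}\right]$, $T_i=0$ otherwise (same for $T'$). A ring isomorphism $\phi:T\to T'$ is graded if $\phi(T_i)\subseteq T'_i$ for all $i\in\mathbb Z$, anti-graded if $\phi(T_i)\subseteq T'_{-i}$ for all $i$; $\mathrm{Iso}_g(T,T')$ is the set of all graded and anti-graded isomorphisms. $\phi$ is semigraded if $\phi(T_i)\subseteq T'_i$ for $i\in\{-1,1\}$, and anti-semigraded if $\phi(T_i)\subseteq T'_{-i}$ for $i\in\{-1,1\}$. $\mathrm{Iso}_0(T,T')=\mathrm{Iso}_0^0(T,T')\cup\mathrm{Iso}_0^1(T,T')$, where $\mathrm{Iso}_0^0(T,T')$ is the set of maps $\phi\left(\left[\begin{smallmatrix} r & m\\ n & s\end{smallmatrix}\right]\right)=\left[\begin{smallmatrix}\gamma(r) & \gamma(r)m'_0-m'_0\delta(s)+u(m)\\ n'_0\gamma(r)-\delta(s)n'_0+v(n) & \delta(s)\end{smallmatrix}\right]$ with $\gamma:R\to R'$, $\delta:S\to S'$ ring isomorphisms, $u:M\to M'$, $v:N\to N'$ additive bijections with $u(rms)=\gamma(r)u(m)\delta(s)$, $v(snr)=\delta(s)v(n)\gamma(r)$, and $m'_0\in M'$, $n'_0\in N'$ with $[m'_0,N']=0$, $(N',m'_0)=0$, $[M',n'_0]=0$, $(n'_0,M')=0$, $[u(m),v(n)]=\gamma([m,n])$,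 $(v(n),u(m))=\delta((n,m))$; and $\mathrm{Iso}_0^1(T,T')$ is the set of maps $\psi\left(\left[\begin{smallmatrix} r & m\\ n & s\end{smallmatrix}\right]\right)=\left[\begin{smallmatrix}\sigma(s) & m'_*\rho(r)-\sigma(s)m'_*+\nu(n)\\ \rho(r)n'_*-n'_*\sigma(s)+\mu(m) & \rho(r)\end{smallmatrix}\right]$ with $\rho:R\to S'$, $\sigma:S\to R'$ ring isomorphisms, $\mu:M\to N'$, $\nu:N\to M'$ additive bijections with $\mu(rms)=\rho(r)\mu(m)\sigma(s)$, $\nu(snr)=\sigma(s)\nu(n)\rho(r)$, and $m'_*\in M'$, $n'_*\in N'$ with $[m'_*,N']=0$, $(N',m'_* )=0$, $[M',n'_*]=0$, $(n'_*,M')=0$, $(\mu(m),\nu(n))=\rho([m,n])$, $[\nu(n),\mu(m)]=\sigma((n,m))$. All such maps are ring isomorphisms. *)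

From HB Require Import structures.
From mathcomp Require Import all_boot all_order all_algebra.
Set Implicit Arguments. Unset Strict Implicit. Unset Printing Implicit Defensive.
Import GRing.Theory.
Local Open Scope ring_scope.

(* A Morita context (R,S,M,N,f,g): M an R-S-bimodule, N an S-R-bimodule,
   [m,n] = pMN m n : R and (n,m) = pNM n m : S coming from bimodule
   morphisms M (x)_S N -> R and N (x)_R M -> S, with the two
   associativity conditions. *)
Record morita_context (R S : nzRingType) (M N : zmodType) := MoritaContext {
  actRM : R -> M -> M;
  actMS : M -> S -> M;
  actSN : S -> N -> N;
  actNR : N -> R -> N;
  pMN : M -> N -> R;
  pNM : N -> M -> S;
  actRM_addl : forall r1 r2 m, actRM (r1 + r2) m = actRM r1 m + actRM r2 m;
  actRM_addr : forall r m1 m2, actRM r (m1 + m2) = actRM r m1 + actRM r m2;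
  actRM_mul : forall r1 r2 m, actRM (r1 * r2) m = actRM r1 (actRM r2 m);
  actRM_one : forall m, actRM 1 m = m;
  actMS_addl : forall m1 m2 s, actMS (m1 + m2) s = actMS m1 s + actMS m2 s;
  actMS_addr : forall m s1 s2, actMS m (s1 + s2) = actMS m s1 + actMS m s2;
  actMS_mul : forall m s1 s2, actMS m (s1 * s2) = actMS (actMS m s1) s2;
  actMS_one : forall m, actMS m 1 = m;
  actRMS : forall r m s, actMS (actRM r m) s = actRM r (actMS m s);
  actSN_addl : forall s1 s2 n, actSN (s1 + s2) n = actSN s1 n + actSN s2 n;
  actSN_addr : forall s n1 n2, actSN s (n1 + n2) = actSN s n1 + actSN s n2;
  actSN_mul : forall s1 s2 n, actSN (s1 * s2) n = actSN s1 (actSN s2 n);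
  actSN_one : forall n, actSN 1 n = n;
  actNR_addl : forall n1 n2 r, actNR (n1 + n2) r = actNR n1 r + actNR n2 r;
  actNR_addr : forall n r1 r2, actNR n (r1 + r2) = actNR n r1 + actNR n r2;
  actNR_mul : forall n r1 r2, actNR n (r1 * r2) = actNR (actNR n r1) r2;
  actNR_one : forall n, actNR n 1 = n;
  actSNR : forall s n r, actNR (actSN s n) r = actSN s (actNR n r);
  pMN_addl : forall m1 m2 n, pMN (m1 + m2) n = pMN m1 n + pMN m2 n;
  pMN_addr : forall m n1 n2, pMN m (n1 + n2) = pMN m n1 + pMN m n2;
  pMN_bal : forall m s n, pMN (actMS m s) n = pMN m (actSN s n);
  pMN_l : forall r m n, pMN (actRM r m) n = r * pMN m n;
  pMN_r : forall m n r, pMN m (actNR n r) = pMN m n * r;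
  pNM_addl : forall n1 n2 m, pNM (n1 + n2) m = pNM n1 m + pNM n2 m;
  pNM_addr : forall n m1 m2, pNM n (m1 + m2) = pNM n m1 + pNM n m2;
  pNM_bal : forall n r m, pNM (actNR n r) m = pNM n (actRM r m);
  pNM_l : forall s n m, pNM (actSN s n) m = s * pNM n m;
  pNM_r : forall n m s, pNM n (actMS m s) = pNM n m * s;
  assoc_M : forall m n m', actRM (pMN m n) m' = actMS m (pNM n m');
  assoc_N : forall n m n', actSN (pNM n m) n' = actNR n (pMN m n')
}.

Record mc_elt (R S M N : Type) := MCElt { e11 : R; e12 : M; e21 : N; e22 : S }.

Section MCRing.
Variables (R S : nzRingType) (M N : zmodType) (C : morita_context R S M N).

Definition mc_add (x y : mc_elt R S M N) : mc_elt R S M N :=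
  MCElt (e11 x + e11 y) (e12 x + e12 y) (e21 x + e21 y) (e22 x + e22 y).

Definition mc_one : mc_elt R S M N := MCElt 1 0 0 1.

Definition mc_mul (x y : mc_elt R S M N) : mc_elt R S M N :=
  MCElt (e11 x * e11 y + pMN C (e12 x) (e21 y))
        (actRM C (e11 x) (e12 y) + actMS C (e12 x) (e22 y))
        (actNR C (e21 x) (e11 y) + actSN C (e22 x) (e21 y))
        (pNM C (e21 x) (e12 y) + e22 x * e22 y).

(* Homogeneous components of the Z-grading. *)
Definition in_Tm1 (x : mc_elt R S M N) : Prop := e11 x = 0 /\ e12 x = 0 /\ e22 x = 0.
Definition in_T0 (x : mc_elt R S M N) : Prop := e12 x = 0 /\ e21 x = 0.
Definition in_T1 (x : mc_elt R S M N) : Prop := e11 x = 0 /\ e21 x = 0 /\ e22 x = 0.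
End MCRing.

Definition ring_iso (A B : nzRingType) (f : A -> B) : Prop :=
  (forall x y, f (x + y) = f x + f y) /\ (forall x y, f (x * y) = f x * f y) /\
  f 1 = 1 /\ bijective f.

Definition additive_bij (A B : zmodType) (f : A -> B) : Prop :=
  (forall x y, f (x + y) = f x + f y) /\ bijective f.

Definition indecomposable (A : nzRingType) : Prop :=
  forall e : A, e * e = e -> (forall x : A, e * x = x * e) -> e = 0 \/ e = 1.

Section Isos.
Variables (R S : nzRingType) (M N : zmodType) (C : morita_context R S M N).
Variables (R' S' : nzRingType) (M' N' : zmodType) (C' : morita_context R' S' M' N').

Local Notation T := (mc_elt R S M N).
Local Notation T' := (mc_elt R' S' M' N').

Definition mc_ring_iso (phi : T -> T') : Prop :=
  (forall x y, phi (mc_add x y) = mc_add (phi x) (phi y)) /\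
  (forall x y, phi (mc_mul C x y) = mc_mul C' (phi x) (phi y)) /\
  phi (mc_one R S M N) = mc_one R' S' M' N' /\ bijective phi.

Definition graded (phi : T -> T') : Prop :=
  (forall x, in_Tm1 x -> in_Tm1 (phi x)) /\ (forall x, in_T0 x -> in_T0 (phi x)) /\
  (forall x, in_T1 x -> in_T1 (phi x)).

Definition antigraded (phi : T -> T') : Prop :=
  (forall x, in_Tm1 x -> in_T1 (phi x)) /\ (forall x, in_T0 x -> in_T0 (phi x)) /\
  (forall x, in_T1 x -> in_Tm1 (phi x)).

Definition semigraded (phi : T -> T') : Prop :=
  (forall x, in_Tm1 x -> in_Tm1 (phi x)) /\ (forall x, in_T1 x -> in_T1 (phi x)).

Definition antisemigraded (phi : T -> T') : Prop :=
  (forall x, in_Tm1 x -> in_T1 (phi x)) /\ (forall x, in_T1 x -> in_Tm1 (phi x)).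

Definition Iso_g (phi : T -> T') : Prop :=
  mc_ring_iso phi /\ (graded phi \/ antigraded phi).

Definition Iso_0_0 (phi : T -> T') : Prop :=
  exists (gamma : R -> R') (delta : S -> S') (u : M -> M') (v : N -> N')
         (m0 : M') (n0 : N'),
    ring_iso gamma /\ ring_iso delta /\ additive_bij u /\ additive_bij v /\
        (forall r m s, u (actRM C r (actMS C m s))
                       = actRM C' (gamma r) (actMS C' (u m) (delta s))) /\
        (forall s n r, v (actSN C s (actNR C n r))
                       = actSN C' (delta s) (actNR C' (v n) (gamma r))) /\
        ((forall n', pMN C' m0 n' = 0) /\ (forall n', pNM C' n' m0 = 0)) /\
        (forall m', pMN C' m' n0 = 0) /\ (forall m', pNM C' n0 m' = 0) /\
        (forall m n, pMN C' (u m) (v n) = gamma (pMN C m n)) /\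
        (forall m n, pNM C' (v n) (u m) = delta (pNM C n m)) /\
        (forall x : T, phi x =
           MCElt (gamma (e11 x))
                 (actRM C' (gamma (e11 x)) m0 - actMS C' m0 (delta (e22 x)) + u (e12 x))
                 (actNR C' n0 (gamma (e11 x)) - actSN C' (delta (e22 x)) n0 + v (e21 x))
                 (delta (e22 x))).

Definition Iso_0_1 (psi : T -> T') : Prop :=
  exists (rho : R -> S') (sigma : S -> R') (mu : M -> N') (nu : N -> M')
         (ms : M') (ns : N'),
    ring_iso rho /\ ring_iso sigma /\ additive_bij mu /\ additive_bij nu /\
        (forall r m s, mu (actRM C r (actMS C m s))
                       = actSN C' (rho r) (actNR C' (mu m) (sigma s))) /\
        (forall s n r, nu (actSN C s (actNR C n r))
                       = actRM C' (sigma s) (actMS C' (nu n) (rho r))) /\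
        ((forall n', pMN C' ms n' = 0) /\ (forall n', pNM C' n' ms = 0)) /\
        (forall m', pMN C' m' ns = 0) /\ (forall m', pNM C' ns m' = 0) /\
        (forall m n, pNM C' (mu m) (nu n) = rho (pMN C m n)) /\
        (forall m n, pMN C' (nu n) (mu m) = sigma (pNM C n m)) /\
        (forall x : T, psi x =
           MCElt (sigma (e22 x))
                 (actMS C' ms (rho (e11 x)) - actRM C' (sigma (e22 x)) ms + nu (e21 x))
                 (actSN C' (rho (e11 x)) ns - actNR C' ns (sigma (e22 x)) + mu (e12 x))
                 (rho (e11 x))).

Definition Iso_0 (phi : T -> T') : Prop := Iso_0_0 phi \/ Iso_0_1 phi.
End Isos.

From HB Require Import structures.
From mathcomp Require Import all_boot all_order all_algebra.
Local Open Scope ring_scope.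

Set Implicit Arguments. Unset Strict Implicit. Unset Printing Implicit Defensive.
Import GRing.Theory.

(* - Iso_0^0 => semigraded: the map [iso00_map] built from data (gamma, delta, u, v, m0, n0)
     is additive, unital, bijective when its components are, semigraded, and multiplicative
     because m0 and n0 are killed by both pairings ([null_pair]).
   - semigraded => Iso_0^0: a semigraded isomorphism phi sends the corner idempotents e11, e22
     of T to e and 1 - e with e T' (1 - e) in T'_1 and (1 - e) T' e in T'_{-1}.  A Peirce
     argument makes the diagonal entries of e central idempotents of R' and S'; by
     indecomposability and nontriviality e = [1 m0; n0 0] with [null_pair m0 n0]
     ([corner_form]).  Evaluating phi on the four corners of T then identifies phi with the
     [iso00_map] of its components ([phi_iso00]).
   - Part (2) follows from part (1) applied to the transposed ring [S' N'; M' R']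
     ([swap_context]), which exchanges T'_1 with T'_{-1} and Iso_0^1 with Iso_0^0.
   - Graded (anti-graded) isomorphisms are semigraded (anti-semigraded). *)

Lemma inj_section_bij (A B : Type) (f : A -> B) (f' : B -> A) :
  cancel f' f -> injective f -> bijective f.
Proof. by move=> fK f_inj; exists f' => //; apply: inj_can_sym. Qed.

Section AdditiveMaps.
Variables (A B : zmodType) (f : A -> B).
Hypothesis f_add : forall x y, f (x + y) = f x + f y.
Lemma additive_0 : f 0 = 0.
Proof. by apply: (@addrI _ (f 0)); rewrite -f_add !addr0. Qed.
Lemma additive_N x : f (- x) = - f x.
Proof. by apply/eqP; rewrite -subr_eq0 opprK -f_add addNr additive_0. Qed.
End AdditiveMaps.

Section ContextArithmetic.
Variables (R S : nzRingType) (M N : zmodType) (C : morita_context R S M N).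
Lemma actRM0l m : actRM C 0 m = 0.
Proof. exact: (additive_0 (fun r1 r2 => actRM_addl C r1 r2 m)). Qed.
Lemma actRM0r r : actRM C r 0 = 0.
Proof. exact: (additive_0 (actRM_addr C r)). Qed.
Lemma actRMNr r m : actRM C r (- m) = - actRM C r m.
Proof. exact: (additive_N (actRM_addr C r)). Qed.
Lemma actMS0l s : actMS C 0 s = 0.
Proof. exact: (additive_0 (fun m1 m2 => actMS_addl C m1 m2 s)). Qed.
Lemma actMS0r m : actMS C m 0 = 0.
Proof. exact: (additive_0 (actMS_addr C m)). Qed.
Lemma actMSNl m s : actMS C (- m) s = - actMS C m s.
Proof. exact: (additive_N (fun m1 m2 => actMS_addl C m1 m2 s)). Qed.
Lemma actSN0l n : actSN C 0 n = 0.
Proof. exact: (additive_0 (fun s1 s2 => actSN_addl C s1 s2 n)). Qed.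
Lemma actSN0r s : actSN C s 0 = 0.
Proof. exact: (additive_0 (actSN_addr C s)). Qed.
Lemma actSNNr s n : actSN C s (- n) = - actSN C s n.
Proof. exact: (additive_N (actSN_addr C s)). Qed.
Lemma actNR0l r : actNR C 0 r = 0.
Proof. exact: (additive_0 (fun n1 n2 => actNR_addl C n1 n2 r)). Qed.
Lemma actNR0r n : actNR C n 0 = 0.
Proof. exact: (additive_0 (actNR_addr C n)). Qed.
Lemma actNRNl n r : actNR C (- n) r = - actNR C n r.
Proof. exact: (additive_N (fun n1 n2 => actNR_addl C n1 n2 r)). Qed.
Lemma pMN0l n : pMN C 0 n = 0.
Proof. exact: (additive_0 (fun m1 m2 => pMN_addl C m1 m2 n)). Qed.
Lemma pMN0r m : pMN C m 0 = 0.
Proof. exact: (additive_0 (pMN_addr C m)). Qed.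
Lemma pMNNl m n : pMN C (- m) n = - pMN C m n.
Proof. exact: (additive_N (fun m1 m2 => pMN_addl C m1 m2 n)). Qed.
Lemma pMNNr m n : pMN C m (- n) = - pMN C m n.
Proof. exact: (additive_N (pMN_addr C m)). Qed.
Lemma pNM0l m : pNM C 0 m = 0.
Proof. exact: (additive_0 (fun n1 n2 => pNM_addl C n1 n2 m)). Qed.
Lemma pNM0r n : pNM C n 0 = 0.
Proof. exact: (additive_0 (pNM_addr C n)). Qed.
Lemma pNMNl n m : pNM C (- n) m = - pNM C n m.
Proof. exact: (additive_N (fun n1 n2 => pNM_addl C n1 n2 m)). Qed.
Lemma pNMNr n m : pNM C n (- m) = - pNM C n m.
Proof. exact: (additive_N (pNM_addr C n)). Qed.
End ContextArithmetic.

Definition ctx_simp := (actRM0l, actRM0r, actMS0l, actMS0r, actSN0l, actSN0r,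
  actNR0l, actNR0r, pMN0l, pMN0r, pNM0l, pNM0r, actRM_one, actMS_one, actSN_one,
  actNR_one, mulr0, mul0r, mulr1, mul1r, addr0, add0r, oppr0, subr0, subrr).

Lemma peirce_central (A : nzRingType) (c : A) :
  (forall x, c * (x * (1 - c)) = 0) -> (forall x, (1 - c) * (x * c) = 0) ->
  c * c = c /\ forall x, c * x = x * c.
Proof.
move=> cA1c c1Ac; have cxc x : c * x = c * (x * c).
  by apply/eqP; rewrite -subr_eq0 -mulrBr -{1}[x]mulr1 -mulrBr cA1c.
split; first by have := cxc 1; rewrite mul1r mulr1 => <-.
move=> x; rewrite cxc; apply/esym/eqP.
by rewrite -subr_eq0 -{1}[x * c]mul1r -mulrBl c1Ac.
Qed.

Definition null_pair (R S : nzRingType) (M N : zmodType) (C : morita_context R S M N)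
    (m0 : M) (n0 : N) : Prop :=
  [/\ forall n, pMN C m0 n = 0, forall n, pNM C n m0 = 0,
      forall m, pMN C m n0 = 0 & forall m, pNM C n0 m = 0].

(* An element E = [a m0; n0 b] of T, with F = 1 - E, such that E T F lies in T_1 and
   F T E lies in T_{-1}; this is what a semigraded isomorphism makes of the image of
   the corner idempotent e11. *)
Section CornerIdempotents.
Variables (R S : nzRingType) (M N : zmodType) (C : morita_context R S M N).
Variables (a : R) (m0 : M) (n0 : N) (b : S).
Local Notation E := (MCElt a m0 n0 b).
Local Notation F := (MCElt (1 - a) (- m0) (- n0) (1 - b)).
Hypothesis EF_T1 : forall y, in_T1 (mc_mul C E (mc_mul C y F)).
Hypothesis FE_Tm1 : forall y, in_Tm1 (mc_mul C F (mc_mul C y E)).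

Lemma corner_R_central : a * a = a /\ forall r, a * r = r * a.
Proof.
apply: peirce_central => r.
  by have [] := EF_T1 (MCElt r 0 0 0); rewrite /mc_mul /= !ctx_simp.
by have [] := FE_Tm1 (MCElt r 0 0 0); rewrite /mc_mul /= !ctx_simp.
Qed.

Lemma corner_S_central : b * b = b /\ forall s, b * s = s * b.
Proof.
apply: peirce_central => s.
  by have [_ []] := EF_T1 (MCElt 0 0 0 s); rewrite /mc_mul /= !ctx_simp.
by have [_ []] := FE_Tm1 (MCElt 0 0 0 s); rewrite /mc_mul /= !ctx_simp.
Qed.

Lemma corner_offdiag : actRM C (1 - a) m0 = 0 /\ actNR C n0 (1 - a) = 0.
Proof.
split; first by have [_ []] := FE_Tm1 (MCElt 1 0 0 0); rewrite /mc_mul /= !ctx_simp.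
by have [_ []] := EF_T1 (MCElt 1 0 0 0); rewrite /mc_mul /= !ctx_simp.
Qed.

Lemma corner_M m : [/\ actRM C (1 - a) (actMS C m b) = 0, a * pMN C m n0 = 0
                     & pNM C n0 (actMS C m (1 - b)) = 0].
Proof.
have [e11 [_ e22]] := EF_T1 (MCElt 0 m 0 0).
have [_ [e12 _]] := FE_Tm1 (MCElt 0 m 0 0).
move: e11 e22 e12; rewrite /mc_mul /= !ctx_simp pMNNr mulrN => /eqP.
by rewrite oppr_eq0 => /eqP.
Qed.

Lemma corner_N n : [/\ actSN C b (actNR C n (1 - a)) = 0, pMN C m0 (actNR C n a) = 0
                     & (1 - b) * pNM C n m0 = 0].
Proof.
have [_ [e21 _]] := EF_T1 (MCElt 0 0 n 0).
have [e11 [_ e22]] := FE_Tm1 (MCElt 0 0 n 0).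
move: e21 e11 e22; rewrite /mc_mul /= !ctx_simp pMNNl => e21 /eqP.
by rewrite oppr_eq0 => /eqP.
Qed.

Hypotheses (indR : indecomposable R) (indS : indecomposable S).

Lemma corner_form : (exists m : M, m != 0) \/ (exists n : N, n != 0) ->
  E <> MCElt 0 0 0 0 -> F <> MCElt 0 0 0 0 -> mc_mul C E E = E ->
  [/\ a = 1, b = 0 & null_pair C m0 n0].
Proof.
move=> nontrivial Enz Fnz EE.
have [aa ca] := corner_R_central; have [bb cb] := corner_S_central.
have [m00 n00] := corner_offdiag; have cM := corner_M; have cN := corner_N.
case: (indR aa ca) => a_val; subst a.
  move: m00 n00; rewrite subr0 actRM_one actNR_one => m00 n00.
  subst m0 n0; case: (indS bb cb) => b_val; subst b; first by [].
  exfalso; case: nontrivial => [[m /eqP]|[n /eqP]]; apply.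
    by have [] := cM m; rewrite subr0 actRM_one actMS_one.
  by have [] := cN n; rewrite subr0 actNR_one actSN_one.
case: (indS bb cb) => b_val; subst b; last first.
  exfalso; move: EE; rewrite /mc_mul /= actRM_one actMS_one actNR_one actSN_one.
  case=> _ /eqP; rewrite -subr_eq0 addrK => /eqP m0_0.
  move=> /eqP; rewrite -subr_eq0 addrK => /eqP n0_0 _.
  by apply: Fnz; rewrite m0_0 n0_0 !subrr !oppr0.
split=> //; split=> [n|n|m|m].
- by have [_ ] := cN n; rewrite actNR_one.
- by have [_ _] := cN n; rewrite subr0 mul1r.
- by have [_ ] := cM m; rewrite mul1r.
- by have [_ _] := cM m; rewrite subr0 actMS_one.
Qed.
End CornerIdempotents.

Lemma addr_shuffle (Z : zmodType) (p q t x w : Z) :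
  p - q + x + (q - t + w) = p - t + (x + w).
Proof. by rewrite addrACA -[p - q + _]addrA addKr. Qed.

Section IsoMap.
Variables (R S : nzRingType) (M N : zmodType) (C : morita_context R S M N).
Variables (R' S' : nzRingType) (M' N' : zmodType) (C' : morita_context R' S' M' N').
Variables (g : R -> R') (d : S -> S') (u : M -> M') (v : N -> N') (m0 : M') (n0 : N').

Definition iso00_map (x : mc_elt R S M N) : mc_elt R' S' M' N' :=
  MCElt (g (e11 x)) (actRM C' (g (e11 x)) m0 - actMS C' m0 (d (e22 x)) + u (e12 x))
        (actNR C' n0 (g (e11 x)) - actSN C' (d (e22 x)) n0 + v (e21 x)) (d (e22 x)).

(* Bijective components give a bijection: invert entrywise after removing the shifts. *)
Lemma iso00_map_bij :
  bijective g -> bijective d -> bijective u -> bijective v -> bijective iso00_map.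
Proof.
move=> [gi gK giK] [di dK diK] [ui uK uiK] [vi vK viK].
pose shiftM (y : mc_elt R' S' M' N') := actRM C' (e11 y) m0 - actMS C' m0 (e22 y).
pose shiftN (y : mc_elt R' S' M' N') := actNR C' n0 (e11 y) - actSN C' (e22 y) n0.
exists (fun y => MCElt (gi (e11 y)) (ui (e12 y - shiftM y))
                       (vi (e21 y - shiftN y)) (di (e22 y))).
  case=> r m n s; rewrite /iso00_map /shiftM /shiftN /= gK dK.
  by rewrite [_ + u _]addrC [_ + v _]addrC !addrK uK vK.
by case=> r m n s; rewrite /iso00_map /shiftM /shiftN /= giK diK uiK viK !subrKC.
Qed.

Hypotheses (g_add : forall x y, g (x + y) = g x + g y)
           (d_add : forall x y, d (x + y) = d x + d y)
           (u_add : forall x y, u (x + y) = u x + u y)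
           (v_add : forall x y, v (x + y) = v x + v y).

Lemma iso00_map_add x y : iso00_map (mc_add x y) = mc_add (iso00_map x) (iso00_map y).
Proof.
case: x y => r m n s [r' m' n' s']; rewrite /iso00_map /mc_add /=.
rewrite g_add d_add u_add v_add actRM_addl actMS_addr actNR_addr actSN_addl.
by congr MCElt; rewrite opprD [RHS]addrACA [X in X + _ = _]addrACA.
Qed.

(* Conversely, when gamma and delta are additive, bijectivity of the map forces that of
   each component (restrict to the corners). *)
Lemma bij_iso00_map : bijective iso00_map ->
  [/\ bijective g, bijective d, bijective u & bijective v].
Proof.
move=> [h hK Kh]; have map_inj := can_inj hK.
have [g0 d0] : g 0 = 0 /\ d 0 = 0.
  by split; apply: additive_0.
have hg y : g (e11 (h y)) = e11 y by rewrite -{2}[y]Kh.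
have hd y : d (e22 (h y)) = e22 y by rewrite -{2}[y]Kh.
have g_inj : injective g.
  move=> x y gxy; suff: MCElt x 0 0 0 = MCElt y 0 0 0 :> mc_elt R S M N by case.
  by apply: map_inj; rewrite /iso00_map /= gxy.
have d_inj : injective d.
  move=> x y dxy; suff: MCElt 0 0 0 x = MCElt 0 0 0 y :> mc_elt R S M N by case.
  by apply: map_inj; rewrite /iso00_map /= dxy.
have h_offdiag m n : e11 (h (MCElt 0 m n 0)) = 0 /\ e22 (h (MCElt 0 m n 0)) = 0.
  by split; [apply: g_inj; rewrite hg | apply: d_inj; rewrite hd].
have hu m : u (e12 (h (MCElt 0 m 0 0))) = m.
  have [h11 h22] := h_offdiag m 0; have := congr1 (@e12 _ _ _ _) (Kh (MCElt 0 m 0 0)).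
  by rewrite /iso00_map /= h11 h22 g0 d0 !ctx_simp.
have hv n : v (e21 (h (MCElt 0 0 n 0))) = n.
  have [h11 h22] := h_offdiag 0 n; have := congr1 (@e21 _ _ _ _) (Kh (MCElt 0 0 n 0)).
  by rewrite /iso00_map /= h11 h22 g0 d0 !ctx_simp.
have u_inj : injective u.
  move=> x y uxy; suff: MCElt 0 x 0 0 = MCElt 0 y 0 0 :> mc_elt R S M N by case.
  by apply: map_inj; rewrite /iso00_map /= uxy.
have v_inj : injective v.
  move=> x y vxy; suff: MCElt 0 0 x 0 = MCElt 0 0 y 0 :> mc_elt R S M N by case.
  by apply: map_inj; rewrite /iso00_map /= vxy.
split; first exact: inj_section_bij (fun y => hg (MCElt y 0 0 0)) g_inj.
- exact: inj_section_bij (fun y => hd (MCElt 0 0 0 y)) d_inj.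
- exact: inj_section_bij hu u_inj.
- exact: inj_section_bij hv v_inj.
Qed.

Section Multiplicative.
Hypotheses (g_mul : forall x y, g (x * y) = g x * g y) (g_one : g 1 = 1)
           (d_mul : forall x y, d (x * y) = d x * d y) (d_one : d 1 = 1).
Hypothesis u_bimod : forall r m s,
  u (actRM C r (actMS C m s)) = actRM C' (g r) (actMS C' (u m) (d s)).
Hypothesis v_bimod : forall s n r,
  v (actSN C s (actNR C n r)) = actSN C' (d s) (actNR C' (v n) (g r)).
Hypothesis null_m0n0 : null_pair C' m0 n0.
Hypothesis uv_pair : forall m n, pMN C' (u m) (v n) = g (pMN C m n).
Hypothesis vu_pair : forall m n, pNM C' (v n) (u m) = d (pNM C n m).

Let u_left r m : u (actRM C r m) = actRM C' (g r) (u m).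
Proof. by have := u_bimod r m 1; rewrite !actMS_one d_one actMS_one. Qed.
Let u_right m s : u (actMS C m s) = actMS C' (u m) (d s).
Proof. by have := u_bimod 1 m s; rewrite !actRM_one g_one actRM_one. Qed.
Let v_left s n : v (actSN C s n) = actSN C' (d s) (v n).
Proof. by have := v_bimod s n 1; rewrite !actNR_one g_one actNR_one. Qed.
Let v_right n r : v (actNR C n r) = actNR C' (v n) (g r).
Proof. by have := v_bimod 1 n r; rewrite !actSN_one d_one actSN_one. Qed.

Let shiftM_null r s : (forall n, pMN C' (actRM C' r m0 - actMS C' m0 s) n = 0) /\
                      (forall n, pNM C' n (actRM C' r m0 - actMS C' m0 s) = 0).
Proof.
have [m0N Nm0 _ _] := null_m0n0.
split=> n; first by rewrite pMN_addl pMNNl pMN_l pMN_bal !m0N mulr0 subrr.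
by rewrite pNM_addr pNMNr pNM_r -pNM_bal !Nm0 mul0r subrr.
Qed.
Let shiftN_null r s : (forall m, pMN C' m (actNR C' n0 r - actSN C' s n0) = 0) /\
                      (forall m, pNM C' (actNR C' n0 r - actSN C' s n0) m = 0).
Proof.
have [_ _ Mn0 n0M] := null_m0n0.
split=> m; first by rewrite pMN_addr pMNNr pMN_r -pMN_bal !Mn0 mul0r subrr.
by rewrite pNM_addl pNMNl pNM_l pNM_bal !n0M mulr0 subrr.
Qed.

Lemma iso00_map_mul x y :
  iso00_map (mc_mul C x y) = mc_mul C' (iso00_map x) (iso00_map y).
Proof.
case: x y => r m n s [r' m' n' s']; rewrite /iso00_map /mc_mul /=.
have [m0N Nm0 Mn0 n0M] := null_m0n0.
congr MCElt.
- rewrite pMN_addl (shiftM_null _ _).1 add0r pMN_addr (shiftN_null _ _).1 add0r.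
  by rewrite g_add g_mul uv_pair.
- rewrite g_add d_add g_mul d_mul -uv_pair -vu_pair actRM_addl actMS_addr actRM_mul actMS_mul.
  rewrite assoc_M Nm0 actMS0r -assoc_M m0N actRM0l addr0 add0r u_add u_left u_right.
  by rewrite !actRM_addr actRMNr !actMS_addl actMSNl actRMS addr_shuffle.
- rewrite g_add d_add g_mul d_mul -uv_pair -vu_pair actNR_addr actSN_addl actNR_mul actSN_mul.
  rewrite -assoc_N n0M actSN0l assoc_N Mn0 actNR0r addr0 add0r v_add v_left v_right.
  by rewrite !actNR_addl actNRNl !actSN_addr actSNNr actSNR addr_shuffle.
- rewrite pNM_addl (shiftN_null _ _).2 add0r pNM_addr (shiftM_null _ _).2 add0r.
  by rewrite d_add d_mul vu_pair.
Qed.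

Lemma iso00_map_one : iso00_map (mc_one R S M N) = mc_one R' S' M' N'.
Proof.
rewrite /iso00_map /= g_one d_one (additive_0 u_add) (additive_0 v_add).
by rewrite actRM_one actMS_one actNR_one actSN_one !subrr !addr0.
Qed.

Lemma iso00_map_semigraded : semigraded iso00_map.
Proof.
have [g0 d0] : g 0 = 0 /\ d 0 = 0 by split; apply: additive_0.
split=> -[r m n s]; rewrite /iso00_map /in_Tm1 /in_T1 /= => -[-> [-> ->]];
  by rewrite g0 d0 ?(additive_0 u_add) ?(additive_0 v_add) !ctx_simp.
Qed.
End Multiplicative.
End IsoMap.

Lemma Iso_0_0_semigraded (R S : nzRingType) (M N : zmodType) (C : morita_context R S M N)
    (R' S' : nzRingType) (M' N' : zmodType) (C' : morita_context R' S' M' N')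
    (phi : mc_elt R S M N -> mc_elt R' S' M' N') :
  Iso_0_0 C C' phi -> mc_ring_iso C C' phi /\ semigraded phi.
Proof.
move=> [g [d [u [v [m0 [n0 [[g_add [g_mul [g_one g_bij]]] [[d_add [d_mul [d_one d_bij]]]
  [[u_add u_bij] [[v_add v_bij]
  [u_bimod [v_bimod [[m0N Nm0] [Mn0 [n0M [uv [vu phiE]]]]]]]]]]]]]]]]].
have null : null_pair C' m0 n0 by split.
have {}phiE : phi =1 iso00_map C' g d u v m0 n0 := phiE.
split; last first.
  have [sgm sgp] := iso00_map_semigraded C' m0 n0 g_add d_add u_add v_add.
  by split=> x; rewrite phiE; [apply: sgm | apply: sgp].
split; first by move=> x y; rewrite !phiE iso00_map_add.
split; first by move=> x y; rewrite !phiE iso00_map_mul.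
split; first by rewrite phiE iso00_map_one.
exact: (eq_bij (iso00_map_bij C' m0 n0 g_bij d_bij u_bij v_bij) (fsym phiE)).
Qed.

Lemma idem_add_eq0 (Z : zmodType) (x : Z) : x + x = x -> x = 0.
Proof. by move=> xx; apply: (@addrI _ x); rewrite addr0. Qed.

Section SemigradedIsos.
Variables (R S : nzRingType) (M N : zmodType) (C : morita_context R S M N).
Variables (R' S' : nzRingType) (M' N' : zmodType) (C' : morita_context R' S' M' N').
Variable phi : mc_elt R S M N -> mc_elt R' S' M' N'.
Hypotheses (phi_iso : mc_ring_iso C C' phi) (phi_sg : semigraded phi).

Let phi_add x y : phi (mc_add x y) = mc_add (phi x) (phi y). Proof. by case: phi_iso. Qed.
Let phi_mul x y : phi (mc_mul C x y) = mc_mul C' (phi x) (phi y).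
Proof. by case: phi_iso => _ []. Qed.
Let phi_one : phi (mc_one R S M N) = mc_one R' S' M' N'.
Proof. by case: phi_iso => _ [_ []]. Qed.
Let phi_bij : bijective phi. Proof. by case: phi_iso => _ [_ []]. Qed.
Let phi_inj : injective phi. Proof. exact: bij_inj. Qed.

Lemma phi_zero : phi (MCElt 0 0 0 0) = MCElt 0 0 0 0.
Proof.
have := phi_add (MCElt 0 0 0 0) (MCElt 0 0 0 0); rewrite /mc_add /= !addr0.
by case: (phi _) => a m n b [/esym/idem_add_eq0 -> /esym/idem_add_eq0 ->
  /esym/idem_add_eq0 -> /esym/idem_add_eq0 ->].
Qed.

(* Semigradedness, transported along phi, forces phi(e11) T' phi(e22) into T'_1
   and phi(e22) T' phi(e11) into T'_{-1}. *)
Lemma phi_sandwich y :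
  in_T1 (mc_mul C' (phi (MCElt 1 0 0 0)) (mc_mul C' y (phi (MCElt 0 0 0 1)))) /\
  in_Tm1 (mc_mul C' (phi (MCElt 0 0 0 1)) (mc_mul C' y (phi (MCElt 1 0 0 0)))).
Proof.
have [phi_inv _ phiK] := phi_bij; rewrite -[y]phiK -!phi_mul.
by case: (phi_inv y) => r m n s; split; [apply: phi_sg.2 | apply: phi_sg.1];
  rewrite /in_T1 /in_Tm1 /mc_mul /= !ctx_simp.
Qed.

Hypotheses (indR : indecomposable R') (indS : indecomposable S').
Hypothesis nontrivial : (exists m' : M', m' != 0) \/ (exists n' : N', n' != 0).

Lemma phi_corners : exists m0 n0,
  [/\ phi (MCElt 1 0 0 0) = MCElt 1 m0 n0 0,
      phi (MCElt 0 0 0 1) = MCElt 0 (- m0) (- n0) 1 & null_pair C' m0 n0].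
Proof.
have phiEF := phi_sandwich.
have E_nz : phi (MCElt 1 0 0 0) <> MCElt 0 0 0 0.
  by rewrite -phi_zero => /phi_inj [] /eqP; rewrite oner_eq0.
have F_nz : phi (MCElt 0 0 0 1) <> MCElt 0 0 0 0.
  by rewrite -phi_zero => /phi_inj [] /eqP; rewrite oner_eq0.
have EE : mc_mul C' (phi (MCElt 1 0 0 0)) (phi (MCElt 1 0 0 0)) = phi (MCElt 1 0 0 0).
  by rewrite -phi_mul /mc_mul /= !ctx_simp.
have EplusF : mc_add (phi (MCElt 1 0 0 0)) (phi (MCElt 0 0 0 1)) = mc_one R' S' M' N'.
  by rewrite -phi_add -phi_one /mc_add /= !ctx_simp.
move: phiEF E_nz F_nz EE EplusF.
case: (phi (MCElt 1 0 0 0)) => a m0 n0 b; case: (phi (MCElt 0 0 0 1)) => a' m1 n1 b'.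
move=> EF E_nz F_nz EE [ea em en eb].
have [? ? ? ?] : [/\ a' = 1 - a, m1 = - m0, n1 = - n0 & b' = 1 - b].
  by split; [move: ea | move: em | move: en | move: eb] =>
    /(canRL (addKr _)); rewrite addrC ?add0r.
subst a' m1 n1 b'.
have [a1 b0 null] := corner_form (fun y => (EF y).1) (fun y => (EF y).2)
                                 indR indS nontrivial E_nz F_nz EE.
by exists m0, n0; rewrite a1 b0 subrr subr0.
Qed.

Section Components.
Variables (m0 : M') (n0 : N').
Hypotheses (phi_E11 : phi (MCElt 1 0 0 0) = MCElt 1 m0 n0 0)
           (phi_E22 : phi (MCElt 0 0 0 1) = MCElt 0 (- m0) (- n0) 1)
           (null : null_pair C' m0 n0).

Let g r := e11 (phi (MCElt r 0 0 0)).
Let d s := e22 (phi (MCElt 0 0 0 s)).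
Let u m := e12 (phi (MCElt 0 m 0 0)).
Let v n := e21 (phi (MCElt 0 0 n 0)).

(* phi on the four corners of T: phi(r e11) = e phi(r e11) e and phi(s e22) = f phi(s e22) f
   with e = [1 m0; n0 0], f = 1 - e; phi(M) and phi(N) stay in place by semigradedness. *)
Lemma phi_R r :
  phi (MCElt r 0 0 0) = MCElt (g r) (actRM C' (g r) m0) (actNR C' n0 (g r)) 0.
Proof.
have [m0N Nm0 Mn0 n0M] := null.
have := phi_mul (mc_mul C (MCElt 1 0 0 0) (MCElt r 0 0 0)) (MCElt 1 0 0 0).
rewrite (phi_mul (MCElt 1 0 0 0)) phi_E11 /mc_mul /= !ctx_simp /g.
case: (phi (MCElt r 0 0 0)) => p q w t /= ->.
by rewrite !m0N !Mn0 Nm0 n0M !ctx_simp.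
Qed.

Lemma phi_S s :
  phi (MCElt 0 0 0 s) = MCElt 0 (- actMS C' m0 (d s)) (- actSN C' (d s) n0) (d s).
Proof.
have [m0N Nm0 Mn0 n0M] := null.
have := phi_mul (mc_mul C (MCElt 0 0 0 1) (MCElt 0 0 0 s)) (MCElt 0 0 0 1).
rewrite (phi_mul (MCElt 0 0 0 1)) phi_E22 /mc_mul /= !ctx_simp /d.
case: (phi (MCElt 0 0 0 s)) => p q w t /= ->.
rewrite !(pMNNl, pMNNr, pNMNl, pNMNr) !m0N !Nm0 !Mn0 !n0M !oppr0 !ctx_simp.
by rewrite actMSNl actSNNr.
Qed.

Lemma phi_M m : phi (MCElt 0 m 0 0) = MCElt 0 (u m) 0 0.
Proof.
have := phi_sg.2 (MCElt 0 m 0 0) (conj erefl (conj erefl erefl)).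
by rewrite /u; case: (phi _) => p q w t [/= -> [-> ->]].
Qed.

Lemma phi_N n : phi (MCElt 0 0 n 0) = MCElt 0 0 (v n) 0.
Proof.
have := phi_sg.1 (MCElt 0 0 n 0) (conj erefl (conj erefl erefl)).
by rewrite /v; case: (phi _) => p q w t [/= -> [-> ->]].
Qed.

Lemma phi_iso00 : phi =1 iso00_map C' g d u v m0 n0.
Proof.
case=> r m n s.
have -> : MCElt r m n s = mc_add (mc_add (mc_add (MCElt r 0 0 0) (MCElt 0 m 0 0))
    (MCElt 0 0 n 0)) (MCElt 0 0 0 s) by rewrite /mc_add /= !addr0 !add0r.
rewrite !phi_add phi_R phi_S phi_M phi_N /iso00_map /mc_add /= !addr0 !add0r.
by congr MCElt; rewrite addrAC.
Qed.

Lemma components_add :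
  [/\ forall x y, g (x + y) = g x + g y, forall x y, d (x + y) = d x + d y,
      forall x y, u (x + y) = u x + u y & forall x y, v (x + y) = v x + v y].
Proof.
split=> x y.
- by have := phi_add (MCElt x 0 0 0) (MCElt y 0 0 0); rewrite /mc_add /= !addr0 /g => ->.
- by have := phi_add (MCElt 0 0 0 x) (MCElt 0 0 0 y); rewrite /mc_add /= !addr0 /d => ->.
- by have := phi_add (MCElt 0 x 0 0) (MCElt 0 y 0 0); rewrite /mc_add /= !addr0 /u => ->.
- by have := phi_add (MCElt 0 0 x 0) (MCElt 0 0 y 0); rewrite /mc_add /= !addr0 /v => ->.
Qed.

Lemma components_mul :
  [/\ forall x y, g (x * y) = g x * g y, g 1 = 1,
      forall x y, d (x * y) = d x * d y & d 1 = 1].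
Proof.
have [m0N _ _ n0M] := null.
split=> [x y | | x y |]; [| by rewrite /g phi_E11 | | by rewrite /d phi_E22].
- have := phi_mul (MCElt x 0 0 0) (MCElt y 0 0 0).
  rewrite !phi_R /mc_mul /= !ctx_simp phi_R => -[->].
  by rewrite pMN_l m0N !ctx_simp.
- have := phi_mul (MCElt 0 0 0 x) (MCElt 0 0 0 y).
  rewrite !phi_S /mc_mul /= !ctx_simp phi_S => -[_ _ _ ->].
  by rewrite pNMNl pNM_l n0M !ctx_simp.
Qed.

Lemma components_bimod :
  [/\ forall r m, u (actRM C r m) = actRM C' (g r) (u m),
      forall m s, u (actMS C m s) = actMS C' (u m) (d s),
      forall s n, v (actSN C s n) = actSN C' (d s) (v n)
    & forall n r, v (actNR C n r) = actNR C' (v n) (g r)].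
Proof.
split=> [r m | m s | s n | n r].
- have := phi_mul (MCElt r 0 0 0) (MCElt 0 m 0 0).
  by rewrite phi_R phi_M /mc_mul /= !ctx_simp phi_M => /(congr1 (@e12 _ _ _ _)) /= ->.
- have := phi_mul (MCElt 0 m 0 0) (MCElt 0 0 0 s).
  by rewrite phi_S phi_M /mc_mul /= !ctx_simp phi_M => /(congr1 (@e12 _ _ _ _)) /= ->.
- have := phi_mul (MCElt 0 0 0 s) (MCElt 0 0 n 0).
  by rewrite phi_S phi_N /mc_mul /= !ctx_simp phi_N => /(congr1 (@e21 _ _ _ _)) /= ->.
- have := phi_mul (MCElt 0 0 n 0) (MCElt r 0 0 0).
  by rewrite phi_R phi_N /mc_mul /= !ctx_simp phi_N => /(congr1 (@e21 _ _ _ _)) /= ->.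
Qed.

Lemma components_pairing :
  (forall m n, pMN C' (u m) (v n) = g (pMN C m n)) /\
  (forall m n, pNM C' (v n) (u m) = d (pNM C n m)).
Proof.
split=> m n.
- have := phi_mul (MCElt 0 m 0 0) (MCElt 0 0 n 0).
  by rewrite phi_M phi_N /mc_mul /= !ctx_simp phi_R => /(congr1 (@e11 _ _ _ _)) /= ->.
- have := phi_mul (MCElt 0 0 n 0) (MCElt 0 m 0 0).
  by rewrite phi_M phi_N /mc_mul /= !ctx_simp phi_S => /(congr1 (@e22 _ _ _ _)) /= ->.
Qed.

Lemma Iso_0_0_of_corners : Iso_0_0 C C' phi.
Proof.
have [g_add d_add u_add v_add] := components_add.
have [g_mul g_one d_mul d_one] := components_mul.
have [u_l u_r v_l v_r] := components_bimod.
have [uv vu] := components_pairing.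
have [m0N Nm0 Mn0 n0M] := null.
have [g_bij d_bij u_bij v_bij] :=
  bij_iso00_map g_add d_add (eq_bij phi_bij phi_iso00).
exists g, d, u, v, m0, n0; do 4 split=> //.
split; first by move=> r m s; rewrite u_l u_r.
split; first by move=> s n r; rewrite v_l v_r.
by do 5 split=> //; apply: phi_iso00.
Qed.
End Components.

Lemma semigraded_Iso_0_0 : Iso_0_0 C C' phi.
Proof.
have [m0 [n0 [phi_E11 phi_E22 null]]] := phi_corners.
exact: Iso_0_0_of_corners phi_E11 phi_E22 null.
Qed.
End SemigradedIsos.

Lemma Iso_0_0_iff_semigraded (R S : nzRingType) (M N : zmodType)
    (C : morita_context R S M N) (R' S' : nzRingType) (M' N' : zmodType)
    (C' : morita_context R' S' M' N') :
  indecomposable R' -> indecomposable S' ->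
  (exists m' : M', m' != 0) \/ (exists n' : N', n' != 0) ->
  forall phi : mc_elt R S M N -> mc_elt R' S' M' N',
    Iso_0_0 C C' phi <-> mc_ring_iso C C' phi /\ semigraded phi.
Proof.
move=> indR indS nontrivial phi; split; first exact: Iso_0_0_semigraded.
by case=> phi_iso phi_sg; apply: semigraded_Iso_0_0.
Qed.

(* Transposition T' = [R' M'; N' S'] -> [S' N'; M' R'] turns anti-semigraded maps
   into semigraded ones and Iso_0^1 into Iso_0^0, which gives part (2). *)
Definition mc_swap (A B X Y : Type) (y : mc_elt A B X Y) : mc_elt B A Y X :=
  MCElt (e22 y) (e21 y) (e12 y) (e11 y).

Lemma mc_swapK (A B X Y : Type) : cancel (@mc_swap A B X Y) (@mc_swap B A Y X).
Proof. by case. Qed.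

Definition swap_context (R S : nzRingType) (M N : zmodType) (C : morita_context R S M N) :
  morita_context S R N M :=
  @MoritaContext S R N M (actSN C) (actNR C) (actRM C) (actMS C) (pNM C) (pMN C)
  (actSN_addl C) (actSN_addr C) (actSN_mul C) (actSN_one C)
  (actNR_addl C) (actNR_addr C) (actNR_mul C) (actNR_one C) (actSNR C)
  (actRM_addl C) (actRM_addr C) (actRM_mul C) (actRM_one C)
  (actMS_addl C) (actMS_addr C) (actMS_mul C) (actMS_one C) (actRMS C)
  (pNM_addl C) (pNM_addr C) (pNM_bal C) (pNM_l C) (pNM_r C)
  (pMN_addl C) (pMN_addr C) (pMN_bal C) (pMN_l C) (pMN_r C)
  (assoc_N C) (assoc_M C).

Section Swap.
Variables (R S : nzRingType) (M N : zmodType) (C : morita_context R S M N).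
Variables (R' S' : nzRingType) (M' N' : zmodType) (C' : morita_context R' S' M' N').
Variable psi : mc_elt R S M N -> mc_elt R' S' M' N'.
Local Notation swapped := (fun x => mc_swap (psi x)).

Lemma mc_swap_mul (x y : mc_elt R' S' M' N') :
  mc_swap (mc_mul C' x y) = mc_mul (swap_context C') (mc_swap x) (mc_swap y).
Proof. by case: x y => ? ? ? ? [? ? ? ?]; congr MCElt; rewrite addrC. Qed.

Lemma swap_ring_iso : mc_ring_iso C C' psi <-> mc_ring_iso C (swap_context C') swapped.
Proof.
split=> -[psi_add [psi_mul [psi_one [psi_inv psiK Kpsi]]]].
  split; first by move=> x y; rewrite psi_add.
  split; first by move=> x y; rewrite psi_mul mc_swap_mul.
  split; first by rewrite psi_one.
  by exists (fun z => psi_inv (mc_swap z)) => [x | z]; rewrite ?psiK ?Kpsi mc_swapK.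
have swap_inj := can_inj (@mc_swapK R' S' M' N').
split; first by move=> x y; apply: swap_inj; rewrite psi_add.
split; first by move=> x y; apply: swap_inj; rewrite psi_mul -mc_swap_mul.
split; first by apply: swap_inj; rewrite psi_one.
exists (fun z => psi_inv (mc_swap z)) => [x | z]; first by rewrite psiK.
by apply: swap_inj; rewrite Kpsi.
Qed.

Lemma swap_antisemigraded : antisemigraded psi <-> semigraded swapped.
Proof.
rewrite /antisemigraded /semigraded /in_Tm1 /in_T1 /=.
by split=> -[h1 h2]; split=> x; [move/h1 | move/h2 | move/h1 | move/h2] => -[? [? ?]].
Qed.

Lemma swap_Iso_0_1 : Iso_0_1 C C' psi <-> Iso_0_0 C (swap_context C') swapped.
Proof.
split=> -[rho [sigma [mu [nu [ms [ns [rho_iso [sigma_iso [mu_bij [nu_bij [mu_bimod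
  [nu_bimod [[msN Nms] [Mns [nsM [mu_nu [nu_mu psiE]]]]]]]]]]]]]]]]];
  exists rho, sigma, mu, nu, ns, ms; do 11 split=> //.
  by move=> x; rewrite psiE.
by move=> x; rewrite -[psi x]mc_swapK psiE.
Qed.
End Swap.

Lemma Iso_0_1_iff_antisemigraded (R S : nzRingType) (M N : zmodType)
    (C : morita_context R S M N) (R' S' : nzRingType) (M' N' : zmodType)
    (C' : morita_context R' S' M' N') :
  indecomposable R' -> indecomposable S' ->
  (exists m' : M', m' != 0) \/ (exists n' : N', n' != 0) ->
  forall phi : mc_elt R S M N -> mc_elt R' S' M' N',
    Iso_0_1 C C' phi <-> mc_ring_iso C C' phi /\ antisemigraded phi.
Proof.
move=> indR indS nontrivial phi.
have nontrivial' : (exists n' : N', n' != 0) \/ (exists m' : M', m' != 0).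
  by case: nontrivial; [right | left].
have [to_swap of_swap] := swap_ring_iso C C' phi.
have [to_swap_sg of_swap_sg] := swap_antisemigraded phi.
apply: (iff_trans (swap_Iso_0_1 C C' phi)).
apply: (iff_trans (Iso_0_0_iff_semigraded C (swap_context C') indS indR nontrivial' _)).
by split=> -[phi_iso phi_sg]; split; auto.
Qed.

Unset Implicit Arguments.

Theorem theorem3p6
  (R S : nzRingType) (M N : zmodType) (C : morita_context R S M N)
  (R' S' : nzRingType) (M' N' : zmodType) (C' : morita_context R' S' M' N') :
  indecomposable R' -> indecomposable S' ->
  ((exists m' : M', m' != 0) \/ (exists n' : N', n' != 0)) ->
  [/\ (forall phi : mc_elt R S M N -> mc_elt R' S' M' N',
         Iso_0_0 C C' phi <-> (mc_ring_iso C C' phi /\ semigraded phi)),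
      (forall phi : mc_elt R S M N -> mc_elt R' S' M' N',
         Iso_0_1 C C' phi <-> (mc_ring_iso C C' phi /\ antisemigraded phi)) &
      (forall phi : mc_elt R S M N -> mc_elt R' S' M' N',
         Iso_g C C' phi -> Iso_0 C C' phi)].
Proof.
move=> indR indS nontrivial.
have part1 := Iso_0_0_iff_semigraded C C' indR indS nontrivial.
have part2 := Iso_0_1_iff_antisemigraded C C' indR indS nontrivial.
split=> // phi [phi_iso [[sgm [_ sgp]] | [asgm [_ asgp]]]].
  by left; apply/part1.
by right; apply/part2.
Qed.
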